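(* Let $f:\mathbb R^p\to\mathbb R$ be differentiable with Lipschitz gradient and $m$-strongly convex ($m\geqslant0$). Let $X,Y$ be square-integrable $p$-dimensional random vectors and $(W_t)_{t\geqslant0}$ a $p$-dimensional Brownian motion independent of $Y$. Set $X_t=X+\sqrt2\,W_t$ and let $(L_t)_{t\geqslant0}$ solve $dL_t=-\nabla f(L_t)\,dt+\sqrt2\,dW_t$, $L_0=Y$. For $h\geqslant0$ set $\psi(h)=\|X_h-L_h\|_2^2+m\int_0^h\|X_h-L_s\|_2^2\,ds$. Then $$\psi(h)\leqslant\|X-L_0\|_2^2+\int_0^h2\big(f(X_s)-f(L_s)\big)\,ds+R_1(h),$$ $$\psi(h)\leqslant\|X-L_0\|_2^2+2h\big(f(X_h)-f(L_h)\big)+R_2(h),$$ where $$R_1(h)=m\int_0^h\big\{\|X_h-L_s\|_2^2-\|X_s-L_s\|_2^2\big\}ds,\qquad R_2(h)=2\int_0^h\big\{f(L_h)-f(L_s)-\sqrt2(W_h-W_s)^\top\nabla f(L_s)\big\}ds .$$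
   Context: $m$-strong convexity means $f(\theta')\geqslant f(\theta)+\nabla f(\theta)^\top(\theta'-\theta)+\frac m2\|\theta'-\theta\|_2^2$ for all $\theta,\theta'$. The inequalities hold pointwise (almost surely). *)

From HB Require Import structures.
From mathcomp Require Import all_boot all_order all_algebra.
From mathcomp Require Import all_classical all_reals all_analysis.
Set Implicit Arguments. Unset Strict Implicit. Unset Printing Implicit Defensive.
Import Order.TTheory GRing.Theory Num.Theory.
Import numFieldNormedType.Exports.
Local Open Scope classical_set_scope.
Local Open Scope ring_scope.

Definition dotv {R : realType} {p : nat} (u v : 'rV[R]_p) : R :=
  \sum_(i < p) u 0 i * v 0 i.
Definition sqnorm2 {R : realType} {p : nat} (v : 'rV[R]_p) : R := dotv v v.
Definition norm2 {R : realType} {p : nat} (v : 'rV[R]_p) : R := Num.sqrt (sqnorm2 v).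

Definition basisv {R : realType} {p : nat} (i : 'I_p) : 'rV[R]_p :=
  \row_(j < p) (i == j)%:R.

Definition grad {R : realType} {p : nat} (f : 'rV[R]_p -> R) (x : 'rV[R]_p)
  : 'rV[R]_p := \row_(i < p) ('d f x) (basisv i).

Definition strongly_convex {R : realType} {p : nat} (m : R) (f : 'rV[R]_p -> R) :=
  forall th th' : 'rV[R]_p,
    f th + dotv (grad f th) (th' - th) + m / 2 * sqnorm2 (th' - th) <= f th'.

Definition lipschitz_grad {R : realType} {p : nat} (f : 'rV[R]_p -> R) :=
  exists K : R, forall x y : 'rV[R]_p,
    norm2 (grad f x - grad f y) <= K * norm2 (x - y).

Definition lint {R : realType} (a b : R) (F : R -> R) : R :=
  Rintegral (@lebesgue_measure R) `[a, b] F.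

Definition vint {R : realType} {p : nat} (a b : R) (F : R -> 'rV[R]_p)
  : 'rV[R]_p := \row_(i < p) lint a b (fun s => F s 0 i).

Definition mutually_indep_events {d} {Omega : measurableType d} {R : realType}
  (P : probability Omega R) {I : eqType} (E : I -> set Omega) :=
  forall s : seq I, uniq s ->
    P (\bigcap_(i in [set x | x \in s]) E i) = (\prod_(i <- s) P (E i))%E.

Definition mutually_indep_rv {d} {Omega : measurableType d} {R : realType}
  (P : probability Omega R) {I : eqType} (Z : I -> Omega -> R) :=
  forall A : I -> set R, (forall i, measurable (A i)) ->
    mutually_indep_events P (fun i => Z i @^-1` A i).

Definition rvec {d} {Omega : measurableType d} {R : realType} {p : nat}
  (X : Omega -> 'rV[R]_p) :=
  forall i : 'I_p, measurable_fun setT (fun w => X w 0 i).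

Definition sq_integrable {d} {Omega : measurableType d} {R : realType} {p : nat}
  (P : probability Omega R) (X : Omega -> 'rV[R]_p) :=
  rvec X /\ P.-integrable setT (fun w => (sqnorm2 (X w))%:E).

Definition brownian_motion {d} {Omega : measurableType d} {R : realType} {p : nat}
  (P : probability Omega R) (W : Omega -> R -> 'rV[R]_p) :=
  [/\ (forall w, W w 0 = 0),
      (forall w, {within `[0, +oo[, continuous (W w)}),
      (forall t, 0 <= t -> rvec (fun w => W w t)) &
      (forall (n : nat) (t : nat -> R), 0 <= t 0%N ->
         (forall k, (k < n)%N -> t k < t k.+1) ->
         let Z := fun ki : 'I_n * 'I_p =>
           fun w => (W w (t ki.1.+1) - W w (t ki.1)) 0 ki.2 in
         mutually_indep_rv P Z /\
         forall ki : 'I_n * 'I_p, forall A : set R, measurable A ->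
           P (Z ki @^-1` A) =
             normal_prob 0 (Num.sqrt (t ki.1.+1 - t ki.1)) A)].

(* independence of the process W from the random vector Y:
   for every finite set of times, the sigma-algebras generated by Y and by
   (W_t)_{t in the set} are independent (checked on measurable rectangles,
   which form a generating pi-system). *)
Definition indep_process_rvec {d} {Omega : measurableType d} {R : realType}
  {p : nat} (P : probability Omega R) (W : Omega -> R -> 'rV[R]_p)
  (Y : Omega -> 'rV[R]_p) :=
  forall (ts : seq R) (A : 'I_p -> set R) (B : R -> 'I_p -> set R),
    (forall i, measurable (A i)) -> (forall t i, measurable (B t i)) ->
    let EY := \bigcap_(i in [set: 'I_p]) ((fun w => Y w 0 i) @^-1` A i) in
    let EW := \bigcap_(t in [set x | x \in ts])
                \bigcap_(i in [set: 'I_p]) ((fun w => W w t 0 i) @^-1` B t i) in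
    P (EY `&` EW) = (P EY * P EW)%E.

From HB Require Import structures.
From mathcomp Require Import all_boot all_order all_algebra.
From mathcomp Require Import all_classical all_reals all_analysis.
From mathcomp Require Import lra.
Import Order.TTheory GRing.Theory Num.Theory.
Import numFieldNormedType.Exports.
Local Open Scope classical_set_scope.
Local Open Scope ring_scope.

(* In X_s - L_s the Brownian terms cancel, so D_s := X_s - L_s equals
   (X - L_0) + int_0^s grad f(L_u) du; it is absolutely continuous and
   |D_h|^2 = |D_0|^2 + int_0^h 2 D_s . grad f(L_s) ds.  Strong convexity at
   L_s bounds the integrand: evaluated at X_s it gives
   2 (f(X_s) - f(L_s)) - m |D_s|^2, which yields the first inequality;
   evaluated at X_h = L_s + D_s + sqrt 2 (W_h - W_s) it gives the second one.
   Adding m int_0^h |X_h - L_s|^2 ds to both sides produces psi and the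
   remainders. *)

Section within_continuous.
Context {R : numFieldType} {T : topologicalType} {A : set T}.
Local Notation cont f := {within A, continuous f}.

Lemma within_continuous_cst {U : topologicalType} (c : U) : cont (fun=> c).
Proof. by move=> x; exact: cvg_cst. Qed.

Lemma within_continuous_comp {U V : topologicalType} {F : U -> V} {g : T -> U} :
  continuous F -> cont g -> cont (fun x => F (g x)).
Proof. by move=> cF cg x; exact: continuous_comp (cg x) (cF _). Qed.

Lemma within_continuousD {V : normedModType R} {f g : T -> V} :
  cont f -> cont g -> cont (fun x => f x + g x).
Proof. by move=> cf cg x; exact: continuousD (cf x) (cg x). Qed.

Lemma within_continuousN {V : normedModType R} {f : T -> V} :
  cont f -> cont (fun x => - f x).
Proof. by move=> cf x; exact: continuousN (cf x). Qed.

Lemma within_continuousZ {V : normedModType R} {k : T -> R} {f : T -> V} :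
  cont k -> cont f -> cont (fun x => k x *: f x).
Proof. by move=> ck cf x; exact: continuousZ (ck x) (cf x). Qed.

Lemma within_continuousM {f g : T -> R} :
  cont f -> cont g -> cont (fun x => f x * g x).
Proof. by move=> cf cg x; exact: continuousM (cf x) (cg x). Qed.

Lemma within_continuous_sum {V : normedModType R} (I : Type) {r : seq I}
    {f : I -> T -> V} :
  (forall i, cont (f i)) -> cont (fun x => \sum_(i <- r) f i x).
Proof.
by move=> cf; apply: continuous_big => [|i _]; [exact: add_continuous|exact: cf].
Qed.

Lemma within_continuous_coord {m n : nat} {M : T -> 'M[R]_(m, n)}
    (i : 'I_m) (j : 'I_n) :
  cont M -> cont (fun x => M x i j).
Proof. exact: within_continuous_comp (@coord_continuous R m n i j). Qed.

Lemma within_continuous_row {n : nat} {v : T -> 'rV[R]_n} :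
  (forall j, cont (fun x => v x 0 j)) -> cont v.
Proof.
move=> cv; rewrite (_ : v = fun x => \sum_(j < n) v x 0 j *: 'e_j).
  apply: within_continuous_sum => j.
  exact: within_continuousZ (cv j) (within_continuous_cst _).
by apply/funext => x; rewrite -row_sum_delta.
Qed.

End within_continuous.

Section dotv.
Context {R : realType} {p : nat}.
Implicit Types u v w : 'rV[R]_p.

Lemma dotvC u v : dotv u v = dotv v u.
Proof. by apply: eq_bigr => i _; rewrite mulrC. Qed.

Lemma dotvDl u v w : dotv (u + v) w = dotv u w + dotv v w.
Proof. by rewrite /dotv -big_split; apply: eq_bigr => i _; rewrite mxE mulrDl. Qed.

Lemma dotvZl (k : R) u v : dotv (k *: u) v = k * dotv u v.
Proof. by rewrite /dotv mulr_sumr; apply: eq_bigr => i _; rewrite mxE mulrA. Qed.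

Lemma sqnorm2_ge0 v : 0 <= sqnorm2 v.
Proof. by apply: sumr_ge0 => i _; rewrite -expr2 sqr_ge0. Qed.

Context {T : topologicalType} {A : set T}.

Lemma within_continuous_dotv {U V : T -> 'rV[R]_p} :
  {within A, continuous U} -> {within A, continuous V} ->
  {within A, continuous (fun x => dotv (U x) (V x))}.
Proof.
move=> cU cV; apply: within_continuous_sum => i.
by apply: within_continuousM; exact: within_continuous_coord.
Qed.

Lemma within_continuous_sqnorm2 {V : T -> 'rV[R]_p} :
  {within A, continuous V} -> {within A, continuous (fun x => sqnorm2 (V x))}.
Proof. by move=> cV; exact: within_continuous_dotv. Qed.

End dotv.

Section interval_integral.
Context {R : realType}.
Implicit Types (a b c x : R) (F G : R -> R).
Local Notation mu := (@lebesgue_measure R).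

Lemma lintxx x F : lint x x F = 0.
Proof. by rewrite /lint set_itv1 Rintegral_set1. Qed.

Lemma lint_cst a b c : a <= b -> lint a b (fun=> c) = c * (b - a).
Proof.
rewrite le_eqVlt => /predU1P[<-|ab]; first by rewrite lintxx subrr mulr0.
by rewrite /lint Rintegral_cst //= lebesgue_measure_itv /= lte_fin ab.
Qed.

Lemma eq_lint a b F G : {in `[a, b], F =1 G} -> lint a b F = lint a b G.
Proof. by move=> FG; apply: eq_Rintegral => x /[!inE] xab; apply: FG. Qed.

Lemma vintxx {p : nat} a (g : R -> 'rV[R]_p) : vint a a g = 0.
Proof. by apply/rowP => i; rewrite !mxE lintxx. Qed.

Context {a b : R}.
Local Notation cont F := {within `[a, b], continuous F}.

Lemma within_continuous_integrable {F} :
  cont F -> mu.-integrable `[a, b] (EFin \o F).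
Proof.
by move=> cF; apply: continuous_compact_integrable => //; exact: segment_compact.
Qed.

Lemma lintD F G : cont F -> cont G ->
  lint a b (fun s => F s + G s) = lint a b F + lint a b G.
Proof.
by move=> cF cG; rewrite /lint RintegralD //; exact: within_continuous_integrable.
Qed.

Lemma lintZl c F : cont F -> lint a b (fun s => c * F s) = c * lint a b F.
Proof.
by move=> cF; rewrite /lint RintegralZl //; exact: within_continuous_integrable.
Qed.

Lemma le_lint F G : cont F -> cont G -> {in `[a, b], forall s, F s <= G s} ->
  lint a b F <= lint a b G.
Proof.
by move=> cF cG FG; apply: le_Rintegral => //; exact: within_continuous_integrable.
Qed.

Lemma lint_sum (I : Type) (r : seq I) (F : I -> R -> R) :
  (forall i, cont (F i)) ->
  lint a b (fun s => \sum_(i <- r) F i s) = \sum_(i <- r) lint a b (F i).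
Proof.
move=> cF; elim: r => [|i r IHr].
  under eq_lint do rewrite big_nil.
  by rewrite big_nil /lint Rintegral_cst //= mul0r.
under eq_lint do rewrite big_cons.
by rewrite big_cons lintD ?IHr //; exact: within_continuous_sum.
Qed.

Hypothesis ab : a <= b.

Lemma within_continuous_lint {F} : cont F -> cont (fun x => lint a x F).
Proof.
move=> cF; apply: parameterized_integral_continuous => //.
exact: within_continuous_integrable.
Qed.

Lemma within_continuous_vint {p : nat} {g : R -> 'rV[R]_p} :
  cont g -> cont (fun x => vint a x g).
Proof.
move=> cg; apply: within_continuous_row => j.
rewrite (_ : (fun x => _) = fun x => lint a x (fun t => g t 0 j)).
  by apply: within_continuous_lint; exact: within_continuous_coord.
by apply/funext => x; rewrite mxE.
Qed.

End interval_integral.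

Ltac within_continuity := repeat match goal with
  | |- {within _, continuous (fun _ => ?c)} => exact: within_continuous_cst
  | |- {within _, continuous (fun _ => ?c * _)} =>
      apply: (within_continuousM (within_continuous_cst c))
  | |- {within _, continuous (fun _ => ?c *: _)} =>
      apply: (within_continuousZ (within_continuous_cst c))
  | |- {within _, continuous (fun _ => _ + _)} => apply: within_continuousD
  | |- {within _, continuous (fun _ => - _)} => apply: within_continuousN
  | |- {within _, continuous (fun _ => _ * _)} => apply: within_continuousM
  | |- {within _, continuous (fun _ => _ *: _)} => apply: within_continuousZ
  | |- {within _, continuous (fun _ => dotv _ _)} =>
      apply: within_continuous_dotv
  | |- {within _, continuous (fun _ => sqnorm2 _)} =>
      apply: within_continuous_sqnorm2
  | |- {within _, continuous (fun _ => vint _ _ _)} =>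
      apply: within_continuous_vint; first assumption
  | |- {within _, continuous (fun _ => ?F _)} =>
      apply: (within_continuous_comp (F := F)); first assumption
  | |- _ => assumption
  end.

(* (c + int_a^s u)^2 has derivative 2 (c + int_a^s u) u(s): integrate by parts
   with both factors equal to the primitive. *)
Lemma lint_primitive_sqr {R : realType} (a b c : R) (u : R -> R) : a <= b ->
  {within `[a, b], continuous u} ->
  lint a b (fun s => 2 * ((c + lint a s u) * u s)) =
    (c + lint a b u) ^+ 2 - c ^+ 2.
Proof.
rewrite le_eqVlt => /predU1P[<- _|ab cu]; first by rewrite !lintxx addr0 subrr.
pose H s := c + lint a s u.
have iu := within_continuous_integrable cu.
have [cu_in _ _] := (continuous_within_itvP _ ab).1 cu.
have H'u x : x \in `]a, b[ -> is_derive x 1 H (u x).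
  move=> xI; have /andP[ax xb] : a < x < b by rewrite in_itv /= in xI.
  have [dF F'] := continuous_FTC1_closed xb iu ax (cu_in x xI).
  have := is_deriveD (is_derive_cst c x 1)
    (DeriveDef dF (etrans (esym (derive1E _ _)) F')).
  by rewrite add0r.
have dH : derivable_oo_LRcontinuous H a b.
  have [_ ca cb] := (continuous_within_itvP _ ab).1
    (within_continuous_lint (ltW ab) cu).
  split=> [x /H'u [] //||]; first exact: cvgD (cvg_cst c) ca.
  exact: cvgD (cvg_cst c) cb.
have H'E : {in `]a, b[, (H^`())%classic =1 u}.
  by move=> x /H'u H'x; rewrite derive1E derive_val.
have cHu := within_continuousM (derivable_oo_LRcontinuous_within dH) cu.
have := Rintegration_by_parts ab cu dH H'E cu dH H'E.
rewrite -/(lint a b _) -/(lint a b _).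
rewrite (eq_lint _ _ (fun s => u s * H s) (fun s => H s * u s)) => [IBP|s _].
  by rewrite (lintZl _ _ cHu); move: IBP; rewrite /H lintxx addr0 !expr2; lra.
by rewrite mulrC.
Qed.

Section energy.
Context {R : realType} {p : nat}.
Implicit Types (a b : R) (c v : 'rV[R]_p) (g : R -> 'rV[R]_p).

Lemma dotv_add_vintE a s c g v :
  dotv (c + vint a s g) v =
    \sum_(i < p) (c 0 i + lint a s (fun t => g t 0 i)) * v 0 i.
Proof. by apply: eq_bigr => i _; rewrite !mxE. Qed.

Lemma lint_primitive_sqnorm2 a b c g : a <= b ->
  {within `[a, b], continuous g} ->
  lint a b (fun s => 2 * dotv (c + vint a s g) (g s)) =
    sqnorm2 (c + vint a b g) - sqnorm2 c.
Proof.
move=> ab cg; have cgi i := within_continuous_coord 0 i cg.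
under eq_lint do rewrite dotv_add_vintE mulr_sumr.
rewrite lint_sum => [|i]; last first.
  apply: (within_continuousM (within_continuous_cst _)).
  apply: within_continuousM (cgi i).
  exact: within_continuousD (within_continuous_cst _)
    (within_continuous_lint ab (cgi i)).
rewrite /sqnorm2 dotv_add_vintE /dotv -sumrB; apply: eq_bigr => i _.
by rewrite lint_primitive_sqr // !mxE !expr2.
Qed.

Lemma le_sqnorm2_add_vint a b c g (Psi Phi : R -> R) : a <= b ->
  {within `[a, b], continuous g} ->
  {within `[a, b], continuous Psi} -> {within `[a, b], continuous Phi} ->
  {in `[a, b], forall s, 2 * dotv (c + vint a s g) (g s) + Psi s <= Phi s} ->
  sqnorm2 (c + vint a b g) + lint a b Psi <= sqnorm2 c + lint a b Phi.
Proof.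
move=> ab cg cPsi cPhi le_Phi.
have cE : {within `[a, b], continuous (fun s => 2 * dotv (c + vint a s g) (g s))}.
  by within_continuity.
have := le_lint _ _ (within_continuousD cE cPsi) cPhi le_Phi.
by rewrite lintD // lint_primitive_sqnorm2 //; lra.
Qed.

End energy.

Lemma lipschitz_continuous {K : realFieldType} {V W : normedModType K}
    (F : V -> W) (k : K) :
  (forall x y, `|F x - F y| <= k * `|x - y|) -> continuous F.
Proof.
move=> Fk x; apply/cvgrPdist_lt => e e0.
have k1 : 0 < `|k| + 1 by rewrite ltr_pwDr.
near=> y.
have dxy : `|x - y| * (`|k| + 1) < e.
  by rewrite -ltr_pdivlMr //; near: y; apply: cvgr_dist_lt => //; exact: divr_gt0.
have := Fk x y; have := ler_norm k; have := normr_ge0 (x - y); nra.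
Unshelve. all: by end_near. Qed.

Section norm2.
Context {R : realType} {p : nat}.
Implicit Types v : 'rV[R]_p.

Lemma coord_le_norm2 v j : `|v 0 j| <= norm2 v.
Proof.
rewrite /norm2 -sqrtr_sqr ler_sqrt ?sqnorm2_ge0 // /sqnorm2 /dotv (bigD1 j) //=.
by rewrite expr2 lerDl; apply: sumr_ge0 => k _; rewrite -expr2 sqr_ge0.
Qed.

Lemma mx_norm_le_norm2 v : `|v| <= norm2 v.
Proof.
rewrite [leLHS]mx_normrE; apply: bigmax_le => [|[i j] _].
  by rewrite /norm2 sqrtr_ge0.
by rewrite ord1; exact: coord_le_norm2.
Qed.

Lemma norm2_le_mx_norm v : norm2 v <= Num.sqrt p%:R * `|v|.
Proof.
rewrite /norm2 -[`|v|]ger0_norm // -sqrtr_sqr -sqrtrM //.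
rewrite ler_sqrt ?mulr_ge0 ?sqr_ge0 //.
have -> : p%:R * `|v| ^+ 2 = \sum_(j < p) `|v| ^+ 2.
  by rewrite sumr_const card_ord mulr_natl.
apply: ler_sum => j _; rewrite -expr2 -real_normK ?num_real // lerXn2r ?nnegrE //.
by rewrite [leRHS]mx_normrE; exact: (le_bigmax _ _ (0, j)).
Qed.

End norm2.

Lemma continuous_grad {R : realType} {p : nat} (f : 'rV[R]_p -> R) :
  lipschitz_grad f -> continuous (grad f).
Proof.
move=> [K fK]; apply: (@lipschitz_continuous _ _ _ _ (`|K| * Num.sqrt p%:R)).
move=> x y; apply: le_trans (mx_norm_le_norm2 _) _; apply: le_trans (fK x y) _.
rewrite -mulrA; apply: le_trans (ler_wpM2r _ (ler_norm K)) _.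
  by rewrite /norm2 sqrtr_ge0.
by rewrite ler_wpM2l // norm2_le_mx_norm.
Qed.

Lemma strongly_convex_dotv_le {R : realType} {p : nat} {m : R}
    {f : 'rV[R]_p -> R} :
  strongly_convex m f -> forall th th',
  2 * dotv (th' - th) (grad f th) + m * sqnorm2 (th' - th) <= 2 * (f th' - f th).
Proof. by move=> f_sc th th'; have := f_sc th th'; rewrite dotvC; lra. Qed.

Section langevin_path.
Context {R : realType} {p : nat}.
Context {f : 'rV[R]_p -> R} {m : R} {y : 'rV[R]_p} {W L : R -> 'rV[R]_p} {h : R}.
Variable x : 'rV[R]_p.
Hypotheses (cf : continuous f) (cgrad : continuous (grad f)).
Hypotheses (f_sc : strongly_convex m f) (h_ge0 : 0 <= h) (W0 : W 0 = 0).
Hypotheses (cW : {within `[0, h], continuous W})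
  (cL : {within `[0, h], continuous L}).
Hypothesis L_eq : forall t, 0 <= t ->
  L t = y - vint 0 t (fun s => grad f (L s)) + Num.sqrt 2 *: W t.

Let Xt t := x + Num.sqrt 2 *: W t.
Let g s := grad f (L s).
Let B s := sqnorm2 (Xt h - L s).

Let cg : {within `[0, h], continuous g}.
Proof. by rewrite /g; within_continuity. Qed.

Let cXt : {within `[0, h], continuous Xt}.
Proof. by rewrite /Xt; within_continuity. Qed.

Let cB : {within `[0, h], continuous B}.
Proof. by rewrite /B; within_continuity. Qed.

Lemma langevin_gapE : {in `[0, h], forall s, Xt s - L s = (x - L 0) + vint 0 s g}.
Proof.
move=> s; rewrite in_itv /= => /andP[s_ge0 _].
rewrite !L_eq // vintxx W0 scaler0 subr0 addr0 /Xt.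
by apply/rowP => j; rewrite !mxE; lra.
Qed.

Lemma langevin_energy_le (Phi : R -> R) : {within `[0, h], continuous Phi} ->
  {in `[0, h], forall s, 2 * dotv (Xt s - L s) (g s) + m * B s <= Phi s} ->
  sqnorm2 (Xt h - L h) + m * lint 0 h B <= sqnorm2 (x - L 0) + lint 0 h Phi.
Proof.
move=> cPhi le_Phi; have h_in : h \in `[0, h] by rewrite in_itv /= lexx h_ge0.
rewrite (langevin_gapE _ h_in) -(lintZl m B cB).
apply: le_sqnorm2_add_vint h_ge0 cg _ cPhi _; first by within_continuity.
by move=> s s_in; rewrite -(langevin_gapE _ s_in); exact: le_Phi.
Qed.

Lemma langevin_bound_lint :
  sqnorm2 (Xt h - L h) + m * lint 0 h B <= sqnorm2 (x - L 0)
    + lint 0 h (fun s => 2 * (f (Xt s) - f (L s)))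
    + m * lint 0 h (fun s => B s - sqnorm2 (Xt s - L s)).
Proof.
apply: le_trans (langevin_energy_le (fun s => 2 * (f (Xt s) - f (L s))
                   + m * (B s - sqnorm2 (Xt s - L s))) _ _) _.
- by within_continuity.
- move=> s _; have := strongly_convex_dotv_le f_sc (L s) (Xt s).
  by rewrite /B; lra.
- rewrite (lintD (fun s => 2 * (f (Xt s) - f (L s)))); [|by within_continuity..].
  by rewrite (lintZl m) ?addrA; [exact: lexx|within_continuity].
Qed.

Lemma langevin_bound_endpoint :
  sqnorm2 (Xt h - L h) + m * lint 0 h B <= sqnorm2 (x - L 0)
    + 2 * h * (f (Xt h) - f (L h))
    + 2 * lint 0 h (fun s =>
            f (L h) - f (L s) - Num.sqrt 2 * dotv (W h - W s) (g s)).
Proof.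
apply: le_trans (langevin_energy_le (fun s => 2 * (f (Xt h) - f (L h))
    + 2 * (f (L h) - f (L s) - Num.sqrt 2 * dotv (W h - W s) (g s))) _ _) _.
- by within_continuity.
- move=> s _; rewrite /B; have := strongly_convex_dotv_le f_sc (L s) (Xt h).
  have -> : Xt h - L s = (Xt s - L s) + Num.sqrt 2 *: (W h - W s).
    by rewrite /Xt; apply/rowP => j; rewrite !mxE; lra.
  by rewrite dotvDl dotvZl; lra.
- rewrite (lintD (fun=> 2 * (f (Xt h) - f (L h)))); [|by within_continuity..].
  rewrite (lint_cst 0 h _ h_ge0) lintZl; last by within_continuity.
  by rewrite subr0 addrA [2 * _ * h]mulrAC; exact: lexx.
Qed.

End langevin_path.

Theorem lemma4 (R : realType) (p : nat) (d : measure_display)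
  (Omega : measurableType d) (P : probability Omega R)
  (f : 'rV[R]_p -> R) (m : R)
  (X Y : Omega -> 'rV[R]_p) (W L : Omega -> R -> 'rV[R]_p) :
  (forall x, differentiable f x) ->
  lipschitz_grad f ->
  0 <= m -> strongly_convex m f ->
  sq_integrable P X -> sq_integrable P Y ->
  brownian_motion P W -> indep_process_rvec P W Y ->
  (* L solves dL_t = -grad f(L_t) dt + sqrt 2 dW_t, L_0 = Y (pathwise) *)
  (forall w, {within `[0, +oo[, continuous (L w)}) ->
  (forall w t, 0 <= t ->
     L w t = Y w - vint 0 t (fun s => grad f (L w s)) + Num.sqrt 2 *: W w t) ->
  let Xt := fun w t => X w + Num.sqrt 2 *: W w t in
  let psi := fun w h =>
    sqnorm2 (Xt w h - L w h) + m * lint 0 h (fun s => sqnorm2 (Xt w h - L w s)) in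
  let R1 := fun w h =>
    m * lint 0 h (fun s => sqnorm2 (Xt w h - L w s) - sqnorm2 (Xt w s - L w s)) in
  let R2 := fun w h =>
    2 * lint 0 h (fun s => f (L w h) - f (L w s)
                   - Num.sqrt 2 * dotv (W w h - W w s) (grad f (L w s))) in
  forall w h, 0 <= h ->
    psi w h <= sqnorm2 (X w - L w 0)
               + lint 0 h (fun s => 2 * (f (Xt w s) - f (L w s))) + R1 w h /\
    psi w h <= sqnorm2 (X w - L w 0)
               + 2 * h * (f (Xt w h) - f (L w h)) + R2 w h.
Proof.
move=> f_diff f_lip _ f_sc _ _ [W0 W_cont _ _] _ L_cont L_eq Xt psi R1 R2 w h h_ge0.
have sub0h : `[0, h] `<=` `[0, +oo[.
  by move=> s; rewrite /= !in_itv /= andbT => /andP[].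
have cf : continuous f by move=> x; exact: differentiable_continuous (f_diff x).
have cgrad := continuous_grad _ f_lip.
have cW := continuous_subspaceW sub0h (W_cont w).
have cL := continuous_subspaceW sub0h (L_cont w).
split.
- exact: (langevin_bound_lint (X w) cf cgrad f_sc h_ge0 (W0 w) cW cL (L_eq w)).
- exact: (langevin_bound_endpoint (X w) cf cgrad f_sc h_ge0 (W0 w) cW cL (L_eq w)).
Qed.
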